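(* Let $G$ be a connected simple graph without bridges whose edge set is identified with $[d+1]$, let $B_1,\dots,B_n$ be the bases (spanning trees) of its graphic matroid, all of cardinality $k$, and let $P=\operatorname{tconv}(V)$ with $V=(-e_{B_1},\dots,-e_{B_n})$. Then the origin $\mathbf{0}\in\mathbb{T}^d$ lies in $P$, and $\operatorname{type}_V(\mathbf{0})=(T^{(0)}_1,\dots,T^{(0)}_{d+1})$ with $T^{(0)}_i=\{j\in[n]: i\in B_j\}$.
   Context: Tropical arithmetic is min-plus; $\mathbb{T}^d=\mathbb{R}^{d+1}/\mathbb{R}(1,\dots,1)$; $\operatorname{tconv}\{v_1,\dots,v_n\}=\{\bigoplus_l\lambda_l\odot v_l:\lambda_l\in\mathbb{R}\}$; $e_B=\sum_{i\in B}e_i$. For $m\in[d+1]$ let $\bar S_m=\{\xi\in\mathbb{T}^d:\xi_m=\min_i\xi_i\}$. For $V=(v_1,\dots,v_n)$ and $x\in\mathbb{T}^d$, $\operatorname{type}_V(x)=(T_1,\dots,T_{d+1})$ with $T_m=\{l\in[n]:v_l\in x+\bar S_m\}$. *)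

From HB Require Import structures.
From mathcomp Require Import all_boot all_order all_algebra.
From mathcomp Require Import reals.
Set Implicit Arguments. Unset Strict Implicit. Unset Printing Implicit Defensive.
Import Order.TTheory GRing.Theory Num.Theory.
Local Open Scope ring_scope.

Section Graph.
Variables (d : nat) (Vt : finType) (ends : 'I_d.+1 -> Vt * Vt).

Definition simple_graph : Prop :=
  (forall e, (ends e).1 != (ends e).2) /\
  (forall e f, e != f ->
     ends f != ends e /\ ends f != ((ends e).2, (ends e).1)).

Definition adj_in (S : {set 'I_d.+1}) : rel Vt :=
  fun x y => [exists e in S, (ends e == (x, y)) || (ends e == (y, x))].

Definition connected_in (S : {set 'I_d.+1}) (x y : Vt) : bool :=
  connect (adj_in S) x y.

Definition graph_connected : Prop :=
  forall x y, connected_in [set: 'I_d.+1] x y.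

Definition is_bridge (e : 'I_d.+1) : Prop :=
  ~~ connected_in ([set: 'I_d.+1] :\ e) (ends e).1 (ends e).2.

Definition bridgeless : Prop := forall e, ~ is_bridge e.

Definition spanning_tree (S : {set 'I_d.+1}) : Prop :=
  (forall x y, connected_in S x y) /\
  (forall e, e \in S -> ~~ connected_in (S :\ e) (ends e).1 (ends e).2).
End Graph.

(* Points of T^d are represented by vectors 'I_d.+1 -> R. *)
Section Tropical.
Variables (R : realType) (d n : nat).

(* y = (+)_l lambda_l (.) v_l  (min-plus), written out coordinatewise *)
Definition is_tcomb (v : 'I_n -> 'I_d.+1 -> R) (lam : 'I_n -> R)
    (y : 'I_d.+1 -> R) : Prop :=
  forall i, (forall l, y i <= lam l + v l i) /\ (exists l, y i = lam l + v l i).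

(* x in tconv{v_1..v_n} in T^d: x agrees modulo R(1,..,1) with some
   tropical linear combination *)
Definition in_tconv (v : 'I_n -> 'I_d.+1 -> R) (x : 'I_d.+1 -> R) : Prop :=
  exists (c : R) (lam : 'I_n -> R) (y : 'I_d.+1 -> R),
    is_tcomb v lam y /\ forall i, x i = y i + c.

Definition in_sector (m : 'I_d.+1) (xi : 'I_d.+1 -> R) : bool :=
  [forall i, xi m <= xi i].

Definition ttype (v : 'I_n -> 'I_d.+1 -> R) (x : 'I_d.+1 -> R) (m : 'I_d.+1)
    : {set 'I_n} :=
  [set l | in_sector m (fun i => v l i - x i)].

Definition neg_indicator (B : {set 'I_d.+1}) : 'I_d.+1 -> R :=
  fun i => if i \in B then -1 else 0.
End Tropical.

From HB Require Import structures.
From mathcomp Require Import all_boot all_order all_algebra.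
From mathcomp Require Import reals.
Set Implicit Arguments. Unset Strict Implicit. Unset Printing Implicit Defensive.
Import Order.TTheory GRing.Theory Num.Theory.
Local Open Scope ring_scope.

(* Every edge e of a connected graph lies in a spanning tree: a minimal
   connected edge set containing e is acyclic, because an edge on a cycle
   through e can be replaced by the first other edge of that cycle.  Hence
   every coordinate of the vectors -e_{B_j} attains the minimum -1 for some j,
   so 0 = -1 + 1 is (up to the lineality space) the tropical sum of the
   vectors with all coefficients 0; and since every spanning tree is
   nonempty, the coordinate i of -e_{B_j} is minimal exactly when i is in B_j. *)

Section SpanningTrees.
Variables (d : nat) (Vt : finType) (ends : 'I_d.+1 -> Vt * Vt).

Definition spanning (S : {set 'I_d.+1}) : bool :=
  [forall x, forall y, connected_in ends S x y].

Lemma adj_in_sym S : symmetric (adj_in ends S).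
Proof.
by move=> x y; apply/existsP/existsP => -[g /andP[gS h]]; exists g;
  rewrite gS orbC.
Qed.

Lemma connected_in_sym S x y :
  connected_in ends S x y = connected_in ends S y x.
Proof. exact: (sym_connect_sym (adj_in_sym S)). Qed.

Lemma connected_in_setD1 S f :
  connected_in ends (S :\ f) (ends f).1 (ends f).2 ->
  forall x y, connected_in ends S x y -> connected_in ends (S :\ f) x y.
Proof.
move=> cf x y; apply: connect_sub => a b /existsP[g /andP[gS /orP[]/eqP Eg]].
- have [Egf|gf] := eqVneq g f; first by move: cf; rewrite -Egf Eg.
  by apply: connect1; apply/existsP; exists g; rewrite !inE gf gS Eg eqxx.
- have [Egf|gf] := eqVneq g f.
    by move: cf; rewrite -Egf Eg connected_in_sym.
  by apply: connect1; apply/existsP; exists g; rewrite !inE gf gS Eg eqxx orbT.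
Qed.

Lemma spanning_setD1 S f :
  spanning S -> connected_in ends (S :\ f) (ends f).1 (ends f).2 ->
  spanning (S :\ f).
Proof.
move=> /forallP spS cf; apply/forallP => x; apply/forallP => y.
by apply: connected_in_setD1 => //; move/forallP: (spS x).
Qed.

Lemma path_setD1_avoid (S S' : {set 'I_d.+1}) g u a q :
  S' \subset S -> u \in [:: (ends g).1; (ends g).2] ->
  path (adj_in ends S') a q -> u \notin a :: q ->
  path (adj_in ends (S :\ g)) a q.
Proof.
move=> sS'S ug; elim: q a => [//|b q IH] a /= /andP[/existsP[h /andP[hS hab]] pq].
rewrite !inE negb_or => /andP[ua]; rewrite negb_or => /andP[ub uq].
rewrite IH ?inE ?negb_or ?ub // andbT.
apply/existsP; exists h; rewrite hab andbT !inE (subsetP sS'S _ hS) andbT.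
apply/eqP => Ehg; rewrite {h hS}Ehg in hab.
by move: ug; rewrite !inE; case/orP: hab => /eqP -> /=;
  case/orP => /eqP Eu; rewrite -Eu eqxx in ua ub.
Qed.

Lemma cycle_edge_other_than (S : {set 'I_d.+1}) e :
  (ends e).1 != (ends e).2 -> e \in S ->
  connected_in ends (S :\ e) (ends e).1 (ends e).2 ->
  exists2 g, g \in S :\ e & connected_in ends (S :\ g) (ends g).1 (ends g).2.
Proof.
move=> no_loop eS /connectP[p pp lp].
case: (shortenP pp) lp => -[|x1 p'] /= pp' up' _ lp'.
  by rewrite lp' eqxx in no_loop.
case/andP: pp' => /existsP[g /andP[gSe hg]] pp'; exists g => //.
move: gSe; rewrite !inE => /andP[ge gS].
have x1_to_e1 : connected_in ends (S :\ g) x1 (ends e).1.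
  apply: (connect_trans (y := (ends e).2)).
    apply/connectP; exists p' => //.
    apply: (@path_setD1_avoid S (S :\ e) g (ends e).1) => //.
    - exact: subD1set.
    - by rewrite !inE; case/orP: hg => /eqP ->; rewrite eqxx ?orbT.
    - by case/andP: up'.
  apply: connect1; apply/existsP; exists e; rewrite !inE eq_sym ge eS /=.
  by rewrite -surjective_pairing eqxx orbT.
by case/orP: hg => /eqP ->; rewrite //= connected_in_sym.
Qed.

Lemma spanning_tree_through e :
  simple_graph ends -> graph_connected ends ->
  exists T, spanning_tree ends T /\ e \in T.
Proof.
move=> [no_loop _] conn.
pose P S := spanning S && (e \in S).
have PT : P setT.
  by rewrite /P inE andbT; apply/forallP => x; apply/forallP => y; apply: conn.
case: (@arg_minnP _ setT P (fun S => #|S|) PT) => T /andP[spT eT] minT.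
exists T; split=> //; split=> [x y|f fT].
  by move/forallP: spT => /(_ x)/forallP.
apply/negP => cf.
have [g gTe cg] : exists2 g, g \in T :\ e &
    connected_in ends (T :\ g) (ends g).1 (ends g).2.
  have [<-|fe] := eqVneq f e; first exact: cycle_edge_other_than.
  by exists f; rewrite // !inE fe.
move: gTe; rewrite !inE => /andP[ge gT].
have := minT (T :\ g); rewrite /P spanning_setD1 // !inE eq_sym ge eT.
by rewrite (cardsD1 g T) gT ltnn => /(_ isT).
Qed.

Lemma spanning_tree_neq0 T :
  simple_graph ends -> spanning_tree ends T -> exists i, i \in T.
Proof.
move=> [no_loop _] [conn _].
case/connectP: (conn (ends ord0).1 (ends ord0).2) => -[|x p] /=.
  by move=> _ E; move: (no_loop ord0); rewrite E eqxx.
by case/andP => /existsP[g /andP[gT _]] _ _; exists g.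
Qed.

End SpanningTrees.

Section NegIndicators.
Variables (R : realType) (d n : nat) (B : 'I_n -> {set 'I_d.+1}).

Lemma in_tconv0_neg_indicator :
  (forall i, exists j, i \in B j) ->
  in_tconv (fun j => neg_indicator R (B j)) (fun _ => 0).
Proof.
move=> cover; exists 1, (fun _ => 0), (fun _ => -1).
split=> [i|i]; last by rewrite addNr.
split=> [l|]; first by rewrite add0r /neg_indicator; case: ifP; rewrite ?lerN10.
by have [l il] := cover i; exists l; rewrite add0r /neg_indicator il.
Qed.

Lemma ttype0_neg_indicator :
  (forall j, exists i, i \in B j) ->
  forall m, ttype (fun j => neg_indicator R (B j)) (fun _ => 0) m
              = [set j | m \in B j].
Proof.
move=> nonempty m; apply/setP => l; rewrite !inE /in_sector /neg_indicator.
case: ifP => ml.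
  by apply/forallP => i; rewrite !subr0; case: ifP; rewrite ?lerN10.
apply/negbTE/forallPn; have [i il] := nonempty l; exists i.
by rewrite il !subr0 -ltNge ltrN10.
Qed.

End NegIndicators.

Theorem mainTheorem5 (R : realType) (d n : nat) (Vt : finType)
    (ends : 'I_d.+1 -> Vt * Vt) (B : 'I_n -> {set 'I_d.+1}) :
  simple_graph ends ->
  graph_connected ends ->
  bridgeless ends ->
  injective B ->
  (forall S : {set 'I_d.+1}, spanning_tree ends S <-> exists j, B j = S) ->
  in_tconv (fun j => neg_indicator R (B j)) (fun _ => 0) /\
  (forall i : 'I_d.+1,
     ttype (fun j => neg_indicator R (B j)) (fun _ => 0) i
       = [set j | i \in B j]).
Proof.
move=> simple conn _ _ bases.
split; [apply: in_tconv0_neg_indicator => i | apply: ttype0_neg_indicator => j].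
- have [T [treeT iT]] := spanning_tree_through i simple conn.
  by have [j Ej] := (bases T).1 treeT; exists j; rewrite Ej.
- by apply: spanning_tree_neq0 simple _; apply/bases; exists j.
Qed.
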